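(* Let $n\ge2$, let $\mathbb{K}$ be a field of characteristic not $2,3$ containing a primitive $n$-th root of unity $\epsilon_n$, and let $\mathscr{C}_n=\mathbb{K}[z]/(z^n-1)$ with multiplication $p(z)\circ q(z)=p(\epsilon_nz)q(\epsilon_nz)\mod z^n-1$. Let $\Delta(p)=p(1)p(\epsilon_n)\cdots p(\epsilon_n^{n-1})$. If $p$ is a nonzero idempotent of $(\mathscr{C}_n,\circ)$ with $p\not\equiv1$, then $\Delta(p)=1$, and the set of distinct eigenvalues of $L^\circ_p:q\mapsto p\circ q$ is exactly $\{\epsilon_n^i:0\le i\le n-1\}$. In particular, every nonzero idempotent of $\mathscr{C}_n$ is semi-simple.
   Context: An idempotent $p$ is semi-simple if $\mathscr{C}_n$ is the direct sum of the eigenspaces of $L^\circ_p$. *)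

From HB Require Import structures.
From mathcomp Require Import all_boot all_order all_algebra.
Set Implicit Arguments. Unset Strict Implicit. Unset Printing Implicit Defensive.
Import Order.TTheory GRing.Theory Num.Theory.
Local Open Scope ring_scope.

(* The algebra C_n = K[z]/(z^n - 1) is represented by its canonical
   representatives: polynomials p : {poly K} with size p <= n
   (i.e. degree < n).  *)

Definition inCn (K : fieldType) (n : nat) (p : {poly K}) : Prop := (size p <= n)%N.

Definition circ (K : fieldType) (n : nat) (eps : K) (p q : {poly K}) : {poly K} :=
  ((p \Po (eps *: 'X)) * (q \Po (eps *: 'X))) %% ('X^n - 1).

Definition Delta (K : fieldType) (n : nat) (eps : K) (p : {poly K}) : K :=
  \prod_(i < n) p.[eps ^+ i].

Definition eigval (K : fieldType) (n : nat) (eps : K) (p : {poly K}) (l : K) : Prop :=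
  exists q : {poly K}, [/\ inCn n q, q != 0 & circ n eps p q = l *: q].

Definition semisimple (K : fieldType) (n : nat) (eps : K) (p : {poly K}) : Prop :=
  exists s : seq K, uniq s /\
    (forall q, inCn n q ->
       exists v : nat -> {poly K},
         (forall j, (j < size s)%N -> inCn n (v j) /\ circ n eps p (v j) = s`_j *: v j) /\
         q = \sum_(j < size s) v j) /\
    (forall v : nat -> {poly K},
       (forall j, (j < size s)%N -> inCn n (v j) /\ circ n eps p (v j) = s`_j *: v j) ->
       \sum_(j < size s) v j = 0 -> forall j, (j < size s)%N -> v j = 0).

From HB Require Import structures.
From mathcomp Require Import all_boot all_order all_algebra.
Import Order.TTheory GRing.Theory Num.Theory.
Local Open Scope ring_scope.
Set Implicit Arguments. Unset Strict Implicit.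

(* Evaluation at the powers of eps identifies C_n with K^n, and in these
   coordinates (p o q)(eps^k) = p(eps^(k+1)) q(eps^(k+1)).  Writing
   a_k = p(eps^k), idempotence reads a_k = a_(k+1)^2: a zero would propagate
   backwards around the cycle and kill p, so every a_k is nonzero, and
   Delta = prod a_k = prod a_(k+1)^2 = Delta^2 forces Delta = 1.  An eigenvector
   q for l satisfies a_(k+1) q(eps^(k+1)) = l q(eps^k); going once around the
   cycle gives l^n = Delta = 1.  Conversely, for each n-th root of unity l the
   values l^k a_(k+1) ... a_n interpolate an eigenvector, unique up to scaling,
   and the eigenvectors for l = eps^j, j < n, form a basis because their matrix
   of values is the Vandermonde matrix (eps^(jk)) times an invertible diagonal
   matrix. *)

Lemma poly_of_sizeE (R : nzSemiRingType) (n : nat) (q : {poly R}) :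
  (q \is a poly_of_size n) = (size q <= n)%N.
Proof. by rewrite qualifE. Qed.

Lemma inCnZ (K : fieldType) (n : nat) (c : K) (q : {poly K}) :
  inCn n q -> inCn n (c *: q).
Proof. by rewrite /inCn -!poly_of_sizeE; apply: rpredZ. Qed.

Lemma inCn_sum (K : fieldType) (n : nat) (I : Type) (r : seq I) (P : pred I)
    (F : I -> {poly K}) :
  (forall i, P i -> inCn n (F i)) -> inCn n (\sum_(i <- r | P i) F i).
Proof. by rewrite /inCn -poly_of_sizeE => F_Cn; apply: rpred_sum => i /F_Cn. Qed.

Lemma big_ord_shift_periodic (R : Type) (idx : R) (op : Monoid.com_law idx)
    (n : nat) (F : nat -> R) :
  (forall i, F (i + n)%N = F i) ->
  forall s, \big[op/idx]_(i < n) F (s + i)%N = \big[op/idx]_(i < n) F i.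
Proof.
move=> F_per; elim=> [|s IHs]; first by apply: eq_bigr => i _; rewrite add0n.
rewrite -IHs; case: n F_per {IHs} => [|n] F_per; first by rewrite !big_ord0.
rewrite big_ord_recr big_ord_recl /= addn0 Monoid.mulmC addSnnS F_per.
by congr (op _ _); apply: eq_bigr => i _; rewrite /bump /= add1n addSnnS.
Qed.

Section Interpolation.
Variables (K : fieldType) (x : nat -> K) (m : nat).
Hypothesis x_inj : forall i j, (i < m)%N -> (j < m)%N -> x i = x j -> i = j.

Lemma poly_eq_nodes (p q : {poly K}) : (size p <= m)%N -> (size q <= m)%N ->
  (forall k, (k < m)%N -> p.[x k] = q.[x k]) -> p = q.
Proof.
move=> pm qm eq_pq; apply/subr0_eq.
apply: (roots_geq_poly_eq0 (rs := [seq x k | k <- iota 0 m])).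
- apply/allP => y /mapP[k]; rewrite mem_iota add0n => /andP[_ km] ->.
  by rewrite rootE hornerD hornerN eq_pq // subrr.
- rewrite map_inj_in_uniq ?iota_uniq // => i j; rewrite !mem_iota !add0n.
  by move=> /andP[_ im] /andP[_ jm]; apply: x_inj.
- by rewrite size_map size_iota -poly_of_sizeE rpredB ?poly_of_sizeE.
Qed.

Definition lagrange_poly (k : nat) : {poly K} :=
  \prod_(j <- rem k (iota 0 m)) ('X - (x j)%:P).

Lemma horner_lagrange_poly k j : (k < m)%N -> (j < m)%N ->
  ((lagrange_poly k).[x j] == 0) = (j != k).
Proof.
move=> km jm; rewrite /lagrange_poly horner_prod prodf_seq_eq0.
apply/hasP/idP => [[i] | jk].
  rewrite mem_rem_uniq ?iota_uniq // inE mem_iota add0n => /andP[ik /andP[_ im]] /=.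
  by rewrite hornerXsubC subr_eq0 => /eqP/(x_inj jm im) ->.
exists j; last by rewrite /= hornerXsubC subrr.
by rewrite mem_rem_uniq ?iota_uniq // inE jk mem_iota add0n.
Qed.

Definition interp (f : nat -> K) : {poly K} :=
  \sum_(k < m) (f k / (lagrange_poly k).[x k]) *: lagrange_poly k.

Lemma size_interp f : (size (interp f) <= m)%N.
Proof.
rewrite -poly_of_sizeE; apply: rpred_sum => k _; apply: rpredZ.
have km := ltn_ord k.
rewrite poly_of_sizeE size_prod_XsubC size_rem ?mem_iota ?add0n ?km //.
by rewrite size_iota prednK // (leq_ltn_trans (leq0n k) km).
Qed.

Lemma horner_interp f k : (k < m)%N -> (interp f).[x k] = f k.
Proof.
move=> km; rewrite horner_sum (bigD1 (Ordinal km)) //= big1 => [|j jk].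
  by rewrite addr0 hornerZ mulfVK // horner_lagrange_poly ?negbK.
apply/eqP; rewrite hornerZ mulf_eq0 horner_lagrange_poly //; apply/orP; right.
by apply: contra jk => /eqP kj; apply/eqP/val_inj.
Qed.

End Interpolation.

Section RootsOfUnity.
Variables (K : fieldType) (n : nat) (eps : K).
Hypothesis eps_prim : n.-primitive_root eps.

Lemma prim_expr_inj i j : (i < n)%N -> (j < n)%N -> eps ^+ i = eps ^+ j -> i = j.
Proof.
move=> i_lt j_lt /eqP; rewrite (eq_prim_root_expr eps_prim) !modn_small //.
by move/eqP.
Qed.

Lemma prim_exprDn k : eps ^+ (k + n) = eps ^+ k.
Proof. by rewrite exprD (prim_expr_order eps_prim) mulr1. Qed.

Lemma prim_exprXn j : (eps ^+ j) ^+ n = 1.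
Proof. by rewrite exprAC (prim_expr_order eps_prim) expr1n. Qed.

Lemma horner_modXn_sub1 (r : {poly K}) k :
  (r %% ('X^n - 1)).[eps ^+ k] = r.[eps ^+ k].
Proof.
have root_eps : ('X^n - 1 : {poly K}).[eps ^+ k] = 0.
  by rewrite !hornerE prim_exprXn subrr.
by rewrite [in RHS](divp_eq r ('X^n - 1)) hornerD hornerM root_eps mulr0 add0r.
Qed.

Lemma horner_circ (p q : {poly K}) k :
  (circ n eps p q).[eps ^+ k] = p.[eps ^+ k.+1] * q.[eps ^+ k.+1].
Proof.
by rewrite /circ horner_modXn_sub1 hornerM !horner_comp hornerZ hornerX -exprS.
Qed.

Lemma inCn_circ (p q : {poly K}) : inCn n (circ n eps p q).
Proof.
have n_gt0 := prim_order_gt0 eps_prim.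
rewrite /inCn /circ -ltnS -(size_Xn_sub_1 K n_gt0) ltn_modp.
by rewrite -size_poly_eq0 size_Xn_sub_1.
Qed.

Lemma Cn_eq_horner (p q : {poly K}) : inCn n p -> inCn n q ->
  (forall k, (k < n)%N -> p.[eps ^+ k] = q.[eps ^+ k]) -> p = q.
Proof. exact: (poly_eq_nodes prim_expr_inj). Qed.

Lemma Cn_horner_eq0 (q : {poly K}) : inCn n q ->
  (forall k, (k < n)%N -> q.[eps ^+ k] = 0) -> q = 0.
Proof.
move=> q_Cn q_roots; apply: Cn_eq_horner => // [|k k_lt].
  by rewrite /inCn size_poly0.
by rewrite q_roots // horner0.
Qed.

Lemma circZr (p q : {poly K}) c : circ n eps p (c *: q) = c *: circ n eps p q.
Proof. by rewrite /circ comp_polyZ -scalerAr modpZl. Qed.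

Lemma circ_eigenP (p q : {poly K}) l : inCn n q ->
  reflect (forall k, (k < n)%N -> p.[eps ^+ k.+1] * q.[eps ^+ k.+1] = l * q.[eps ^+ k])
          (circ n eps p q == l *: q).
Proof.
move=> q_Cn; apply: (iffP eqP) => [pq_eig k _ | eig_rel].
  by rewrite -horner_circ pq_eig hornerZ.
apply: Cn_eq_horner => [||k k_lt]; first exact: inCn_circ.
  exact: inCnZ.
by rewrite horner_circ hornerZ eig_rel.
Qed.

Lemma horner_eigen_iter (p q : {poly K}) l : circ n eps p q = l *: q ->
  forall m k, l ^+ m * q.[eps ^+ k] =
              (\prod_(i < m) p.[eps ^+ (k.+1 + i)]) * q.[eps ^+ (k + m)].
Proof.
move=> pq_eig; elim=> [|m IHm] k; first by rewrite expr0 mul1r big_ord0 mul1r addn0.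
have step : p.[eps ^+ (k + m).+1] * q.[eps ^+ (k + m).+1] = l * q.[eps ^+ (k + m)].
  by rewrite -horner_circ pq_eig hornerZ.
by rewrite exprSr mulrAC IHm -mulrA [_ * l]mulrC -step big_ord_recr mulrA addSn addnS.
Qed.

End RootsOfUnity.

Section Idempotent.
Variables (K : fieldType) (n : nat) (eps : K) (p : {poly K}).
Hypotheses (eps_prim : n.-primitive_root eps) (p_Cn : inCn n p).
Hypotheses (p_idem : circ n eps p p = p) (p_neq0 : p != 0).

Let a k := p.[eps ^+ k].

Lemma idem_horner k : a k = a k.+1 ^+ 2.
Proof. by rewrite /a -{1}p_idem (horner_circ eps_prim) expr2. Qed.

Lemma idem_horner_neq0 k : a k != 0.
Proof.
apply: contra p_neq0 => /eqP ak0.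
have zero_below d j : (j + d = k + n)%N -> a j = 0.
  elim: d j => [|d IHd] j; first by rewrite addn0 => ->; rewrite /a prim_exprDn.
  by rewrite addnS -addSn idem_horner => /IHd->; rewrite expr0n.
apply/eqP/(Cn_horner_eq0 eps_prim p_Cn) => j j_lt.
apply: (zero_below (k + n - j)%N).
by rewrite subnKC // ltnW // ltn_addl.
Qed.

Lemma Delta_shift s : \prod_(i < n) a (s + i) = Delta n eps p.
Proof. by apply: big_ord_shift_periodic => i; rewrite /a prim_exprDn. Qed.

Lemma Delta_idem : Delta n eps p = 1.
Proof.
have D_sq : Delta n eps p = Delta n eps p ^+ 2.
  rewrite -{2}(Delta_shift 1) -prodrXl; apply: eq_bigr => i _.
  by rewrite add1n -idem_horner.
have D_neq0 : Delta n eps p != 0 by apply/prodf_neq0 => i _; apply: idem_horner_neq0.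
by apply: (mulIf D_neq0); rewrite mul1r -expr2 -D_sq.
Qed.

Lemma idem_eigenvalue_unity_root q l : inCn n q -> q != 0 -> circ n eps p q = l *: q ->
  l ^+ n = 1.
Proof.
move=> q_Cn q_neq0 pq_eig.
have [k k_lt qk_neq0] : exists2 k, (k < n)%N & q.[eps ^+ k] != 0.
  have [k qk_neq0 | q_roots] := pickP (fun k : 'I_n => q.[eps ^+ k] != 0).
    by exists k.
  case/eqP: q_neq0; apply: (Cn_horner_eq0 eps_prim q_Cn) => k k_lt.
  exact/eqP/negbFE/(q_roots (Ordinal k_lt)).
apply: (mulIf qk_neq0); rewrite mul1r (horner_eigen_iter eps_prim pq_eig n k).
by rewrite (Delta_shift k.+1) Delta_idem mul1r prim_exprDn.
Qed.

Definition suffix_prod k := \prod_(i < n - k) a (k.+1 + i).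

Lemma suffix_prod0 : suffix_prod 0 = 1.
Proof. by rewrite /suffix_prod subn0 Delta_shift Delta_idem. Qed.

Lemma suffix_prodS k : (k < n)%N -> a k.+1 * suffix_prod k.+1 = suffix_prod k.
Proof.
move=> k_lt; rewrite /suffix_prod -(subnSK k_lt) big_ord_recl addn0.
by congr (_ * _); apply: eq_bigr => i _; rewrite addSnnS.
Qed.

Lemma suffix_prod_neq0 k : suffix_prod k != 0.
Proof. by apply/prodf_neq0 => i _; apply: idem_horner_neq0. Qed.

Definition eigvec l :=
  interp (fun k => eps ^+ k) n (fun k => l ^+ k * suffix_prod k).

Lemma inCn_eigvec l : inCn n (eigvec l).
Proof. exact: size_interp. Qed.

Lemma horner_eigvec l k : l ^+ n = 1 -> (k <= n)%N ->
  (eigvec l).[eps ^+ k] = l ^+ k * suffix_prod k.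
Proof.
move=> l_root; rewrite leq_eqVlt => /predU1P[-> | k_lt].
  rewrite l_root /suffix_prod subnn big_ord0 mulr1 (prim_expr_order eps_prim).
  have := horner_interp (prim_expr_inj eps_prim) (fun k => l ^+ k * suffix_prod k)
    (prim_order_gt0 eps_prim).
  by rewrite !expr0 mul1r suffix_prod0.
exact: (horner_interp (prim_expr_inj eps_prim)).
Qed.

Lemma circ_eigvec l : l ^+ n = 1 -> circ n eps p (eigvec l) = l *: eigvec l.
Proof.
move=> l_root; apply/eqP/(circ_eigenP eps_prim p l (inCn_eigvec l)) => k k_lt.
rewrite !(horner_eigvec l_root) ?(ltnW k_lt) // -(suffix_prodS k_lt).
by rewrite (exprS l) mulrCA -mulrA.
Qed.

Lemma eigvec_neq0 l : l ^+ n = 1 -> eigvec l != 0.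
Proof.
move=> l_root; apply/eqP => el0; have := horner_eigvec l_root (leq0n n).
by rewrite el0 horner0 expr0 mul1r suffix_prod0 => /eqP; rewrite eq_sym oner_eq0.
Qed.

Lemma eigvec_unique q l : l ^+ n = 1 -> inCn n q -> circ n eps p q = l *: q ->
  q = q.[1] *: eigvec l.
Proof.
move=> l_root q_Cn pq_eig; apply: (Cn_eq_horner eps_prim q_Cn) => [|k k_lt].
  exact/inCnZ/inCn_eigvec.
have := horner_eigen_iter eps_prim pq_eig (n - k) k.
rewrite (subnKC (ltnW k_lt)) (prim_expr_order eps_prim) => q_iter.
rewrite hornerZ (horner_eigvec l_root (ltnW k_lt)) -[LHS]mul1r -{1}l_root.
by rewrite -[n in l ^+ n](subnKC (ltnW k_lt)) exprD -mulrA q_iter mulrA mulrC.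
Qed.

Lemma horner_sum_eigvec (c : {poly K}) k : inCn n c -> (k < n)%N ->
  (\sum_(j < n) c`_j *: eigvec (eps ^+ j)).[eps ^+ k] = c.[eps ^+ k] * suffix_prod k.
Proof.
move=> c_Cn k_lt; rewrite horner_sum (horner_coef_wide _ c_Cn) big_distrl /=.
apply: eq_bigr => j _.
by rewrite hornerZ (horner_eigvec (prim_exprXn eps_prim j) (ltnW k_lt)) exprAC mulrA.
Qed.

Lemma eigvec_span q : inCn n q ->
  exists2 c : {poly K}, inCn n c & q = \sum_(j < n) c`_j *: eigvec (eps ^+ j).
Proof.
move=> q_Cn.
pose c := interp (fun k => eps ^+ k) n (fun k => q.[eps ^+ k] / suffix_prod k).
have c_Cn : inCn n c := size_interp _ _ _.
exists c => //; apply: (Cn_eq_horner eps_prim q_Cn) => [|k k_lt].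
  by apply: inCn_sum => j _; apply/inCnZ/inCn_eigvec.
rewrite horner_sum_eigvec // (horner_interp (prim_expr_inj eps_prim)) //.
by rewrite divfK ?suffix_prod_neq0.
Qed.

Lemma eigvec_free (c : {poly K}) : inCn n c ->
  \sum_(j < n) c`_j *: eigvec (eps ^+ j) = 0 -> c = 0.
Proof.
move=> c_Cn sum0; apply: (Cn_horner_eq0 eps_prim c_Cn) => k k_lt.
by apply: (mulIf (suffix_prod_neq0 k)); rewrite -horner_sum_eigvec // sum0 horner0 mul0r.
Qed.

Lemma idem_eigval l : eigval n eps p l <-> exists i : 'I_n, l = eps ^+ i.
Proof.
split=> [[q [q_Cn q_neq0 pq_eig]] | [i ->]].
  have [i ->] := prim_rootP eps_prim (idem_eigenvalue_unity_root q_Cn q_neq0 pq_eig).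
  by exists i.
have eps_i_root := prim_exprXn eps_prim i.
exists (eigvec (eps ^+ i)); split; first exact: inCn_eigvec.
  exact: eigvec_neq0.
exact: circ_eigvec.
Qed.

Lemma idem_semisimple : semisimple n eps p.
Proof.
pose s := [seq eps ^+ j | j <- iota 0 n].
have size_s : size s = n by rewrite size_map size_iota.
have nth_s j : (j < n)%N -> s`_j = eps ^+ j.
  by move=> j_lt; rewrite (nth_map 0%N) ?size_iota ?nth_iota.
exists s; rewrite size_s; split; [|split].
- rewrite /s map_inj_in_uniq ?iota_uniq // => i j; rewrite !mem_iota !add0n.
  by move=> /andP[_ i_lt] /andP[_ j_lt]; apply: (prim_expr_inj eps_prim).
- move=> q /eigvec_span[c c_Cn ->].
  exists (fun j => c`_j *: eigvec (eps ^+ j)); split=> // j j_lt.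
  split; first exact/inCnZ/inCn_eigvec.
  rewrite nth_s // circZr (circ_eigvec (prim_exprXn eps_prim j)).
  by rewrite !scalerA mulrC.
- move=> v v_eig sum0 j j_lt.
  have v_eigvec i : (i < n)%N -> v i = (v i).[1] *: eigvec (eps ^+ i).
    move=> i_lt; have [v_Cn] := v_eig i i_lt; rewrite nth_s //.
    exact: eigvec_unique (prim_exprXn eps_prim i) v_Cn.
  pose c := \poly_(i < n) (v i).[1].
  have c0 : c = 0.
    apply: eigvec_free; first exact: size_poly.
    rewrite -[RHS]sum0; apply: eq_bigr => i _.
    by rewrite coef_poly ltn_ord -v_eigvec.
  have vj1 : (v j).[1] = c`_j by rewrite coef_poly j_lt.
  by rewrite v_eigvec // vj1 c0 coef0 scale0r.
Qed.

End Idempotent.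

Unset Implicit Arguments.

Theorem proposition7p2 (K : fieldType) (n : nat) (eps : K)
  (hn : (2 <= n)%N)
  (hc2 : (2 \notin [pchar K])%N) (hc3 : (3 \notin [pchar K])%N)
  (heps : n.-primitive_root eps) :
  (forall p : {poly K}, inCn n p -> circ n eps p p = p -> p != 0 -> p != 1 ->
     Delta n eps p = 1 /\
     (forall l : K, eigval n eps p l <-> exists i : 'I_n, l = eps ^+ i))
  /\
  (forall p : {poly K}, inCn n p -> circ n eps p p = p -> p != 0 ->
     semisimple n eps p).
Proof.
split=> [p p_Cn p_idem p_neq0 _ | p p_Cn p_idem p_neq0].
  split; first exact: Delta_idem heps p_Cn p_idem p_neq0.
  by move=> l; apply: idem_eigval heps p_Cn p_idem p_neq0 l.
exact: idem_semisimple heps p_Cn p_idem p_neq0.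
Qed.
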